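(* Let $X$ be a digraph containing a set of $m$ vertices no two of which form a digon. Then $\eta^+(X)\ge\lceil m/2\rceil$ and $\eta^-(X)\ge \lceil m/2\rceil$.
   Context: A digraph $X$ has a finite vertex set and an arc set of ordered pairs of distinct vertices; $\{x,y\}$ is a digon if both $xy,yx$ are arcs. The Hermitian adjacency matrix $H(X)$ has $(u,v)$-entry $1$ if $uv$ and $vu$ are arcs, $i$ if only $uv$ is an arc, $-i$ if only $vu$ is an arc, and $0$ otherwise. $\eta^+(X)$ (resp. $\eta^-(X)$) is the number of non-negative (resp. non-positive) eigenvalues of $H(X)$, counted with multiplicity. *)

From HB Require Import structures.
From mathcomp Require Import all_boot all_order all_algebra all_field.
Set Implicit Arguments. Unset Strict Implicit. Unset Printing Implicit Defensive.
Import Order.TTheory GRing.Theory Num.Theory.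
Local Open Scope ring_scope.

Definition digraph_ok n (arc : rel 'I_n) : Prop := irreflexive arc.

Definition digon n (arc : rel 'I_n) (u v : 'I_n) : bool := arc u v && arc v u.

Definition herm_adj n (arc : rel 'I_n) : 'M[algC]_n :=
  \matrix_(u, v)
    (if arc u v && arc v u then 1
     else if arc u v then 'i
     else if arc v u then - 'i
     else 0).

(* The eigenvalues of a square complex matrix, listed with multiplicity:
   the roots of its characteristic polynomial (defined up to permutation). *)
Definition eigenvalues n (A : 'M[algC]_n) : seq algC :=
  sval (closed_field_poly_normal (char_poly A)).

Definition eta_plus n (arc : rel 'I_n) : nat :=
  count (fun z : algC => 0 <= z) (eigenvalues (herm_adj arc)).
Definition eta_minus n (arc : rel 'I_n) : nat :=
  count (fun z : algC => z <= 0) (eigenvalues (herm_adj arc)).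

From HB Require Import structures.
From mathcomp Require Import all_boot all_order all_algebra all_field.
Set Implicit Arguments. Unset Strict Implicit. Unset Printing Implicit Defensive.
Import Order.TTheory GRing.Theory Num.Theory.
Local Open Scope ring_scope.
Local Open Scope sesquilinear_scope.

(* On S there are no digons, so the principal submatrix H_S of the Hermitian
   adjacency matrix H has entries 0 and +-i only, i.e. H_S^T = -H_S.  As H_S^T
   and H_S have the same characteristic polynomial, the spectrum of H_S is
   symmetric about 0, so at least half of its m eigenvalues are non-negative;
   applying this to -H_S handles the non-positive ones.  Cauchy interlacing, in
   its min-max form, transfers the bound to H: the non-negative eigenvectors of
   a compression E H E^* (E E^* = 1) pulled back by E span a space on which the
   form x H x^* is non-negative, and such a space meets the span of the negative
   eigenvectors of H trivially. *)

Definition eig_nneg n (A : 'M[algC]_n) : nat :=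
  count (fun z : algC => 0 <= z) (eigenvalues A).

Definition qform n (A : 'M[algC]_n) (x : 'rV_n) : algC := (x *m A *m x^t*) 0 0.

Lemma count_enum_card (T : finType) (p : pred T) :
  count p (enum T) = #|[set x | p x]|.
Proof. by rewrite -size_filter cardsE cardE enumT. Qed.

Lemma qform_mul m k (A : 'M[algC]_m) (E : 'M_(k, m)) y :
  qform A (y *m E) = qform (E *m A *m E^t*) y.
Proof. by rewrite /qform trmx_mul map_mxM !mulmxA. Qed.

Lemma rowsub_mul_trC m p k k' (f : 'I_k -> 'I_m) (g : 'I_k' -> 'I_m)
    (A B : 'M[algC]_(m, p)) :
  rowsub f A *m (rowsub g B)^t* = mxsub f g (A *m B^t*).
Proof.
by apply/matrixP => i j; rewrite !mxE; apply: eq_bigr => l _; rewrite !mxE.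
Qed.

Lemma rowsub_unitarymx m p k (f : 'I_k -> 'I_m) (P : 'M[algC]_(m, p)) :
  injective f -> P \is unitarymx -> rowsub f P \is unitarymx.
Proof.
move=> f_inj /unitarymxP PP; apply/unitarymxP; rewrite rowsub_mul_trC PP.
by apply/matrixP => i j; rewrite !mxE (inj_eq f_inj).
Qed.

Lemma mxsub_diag m k (f : 'I_k -> 'I_m) (d : 'rV[algC]_m) :
  injective f -> mxsub f f (diag_mx d) = diag_mx (\row_i d 0 (f i)).
Proof. by move=> f_inj; apply/matrixP => i j; rewrite !mxE (inj_eq f_inj). Qed.

Lemma qform_unitary_diag m k (P : 'M[algC]_m) (d : 'rV_m)
    (f : 'I_k -> 'I_m) x :
  P \is unitarymx -> injective f ->
  qform (P^t* *m diag_mx d *m P) (x *m rowsub f P) =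
  \sum_i d 0 (f i) * (x 0 i * (x 0 i)^*).
Proof.
move=> /unitarymxP PP f_inj; rewrite qform_mul mul_rowsub_mx rowsub_mul_trC.
rewrite !mulmxA PP mul1mx -!mulmxA PP mulmx1 mxsub_diag //.
rewrite /qform mul_mx_diag mxE.
by apply: eq_bigr => j _; rewrite !mxE mulrCA mulrA.
Qed.

Lemma sum_neg_weights_ge0 k (c : 'I_k -> algC) (y : 'rV[algC]_k) :
  (forall i, c i < 0) -> 0 <= \sum_i c i * (y 0 i * (y 0 i)^*) -> y = 0.
Proof.
move=> c_neg sum_ge0; apply/rowP => i; rewrite mxE.
have term_nneg j : 0 <= - (c j * (y 0 j * (y 0 j)^*)).
  by rewrite oppr_ge0 nmulr_rle0 ?mul_conjC_ge0.
have sum0 : \sum_j - (c j * (y 0 j * (y 0 j)^*)) = 0.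
  by apply/eqP; rewrite eq_le sumr_ge0 // andbT sumrN oppr_le0.
have /eqP := psumr_eq0P (fun j _ => term_nneg j) sum0 (i := i) isT.
by rewrite oppr_eq0 mulf_eq0 mul_conjC_eq0 (lt_eqF (c_neg i)) => /eqP.
Qed.

Section Spectrum.
Variable n : nat.
Implicit Types (A B P : 'M[algC]_n) (d : 'rV[algC]_n).

Lemma char_poly_eigenvalues A :
  char_poly A = \prod_(z <- eigenvalues A) ('X - z%:P).
Proof.
rewrite /eigenvalues; case: closed_field_poly_normal => r /= ->.
by rewrite (monicP (char_poly_monic _)) scale1r.
Qed.

Lemma perm_eigenvalues A B :
  char_poly A = char_poly B -> perm_eq (eigenvalues A) (eigenvalues B).
Proof. by rewrite !char_poly_eigenvalues; apply: prod_XsubC_eq. Qed.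

Lemma char_poly_trmx A : char_poly A^T = char_poly A.
Proof.
rewrite /char_poly -det_tr; congr (\det _).
by apply/matrixP => i j; rewrite !mxE eq_sym.
Qed.

Lemma char_poly_similar_diag P d : P \in unitmx ->
  char_poly (invmx P *m diag_mx d *m P) = \prod_j ('X - (d 0 j)%:P).
Proof.
move=> Pu; rewrite /char_poly.
have -> : char_poly_mx (invmx P *m diag_mx d *m P) =
    map_mx polyC (invmx P) *m char_poly_mx (diag_mx d) *m map_mx polyC P.
  rewrite /char_poly_mx mulmxBr mulmxBl -!map_mxM mul_mx_scalar -scalemxAl.
  by rewrite -map_mxM mulVmx // map_mx1 scalemx1.
rewrite !det_mulmx !det_map_mx mulrC mulrA -rmorphM -det_mulmx.
rewrite mulmxV // det1 rmorph1 mul1r.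
rewrite -/(char_poly (diag_mx d)) char_poly_trig ?diag_mx_is_trig //.
by apply: eq_bigr => i _; rewrite mxE eqxx mulr1n.
Qed.

Lemma eigenvalues_similar_diag P d : P \in unitmx ->
  perm_eq (eigenvalues (invmx P *m diag_mx d *m P))
          [seq d 0 j | j <- enum 'I_n].
Proof.
move=> Pu; apply: prod_XsubC_eq.
by rewrite -char_poly_eigenvalues char_poly_similar_diag // big_map big_enum.
Qed.

Lemma eigenvalues_unitary_diag P d : P \is unitarymx ->
  perm_eq (eigenvalues (P^t* *m diag_mx d *m P)) [seq d 0 j | j <- enum 'I_n].
Proof.
move=> Pu; rewrite -invmx_unitary //.
exact/eigenvalues_similar_diag/unitarymx_unit.
Qed.

End Spectrum.

Section Hermitian.
Variables (n : nat) (A : 'M[algC]_n).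
Hypothesis hermA : A \is hermsymmx.

Lemma hermitian_spectralE :
  A = (spectralmx A)^t* *m diag_mx (spectral_diag A) *m spectralmx A.
Proof.
rewrite -invmx_unitary ?spectral_unitarymx //.
exact/orthomx_spectralP/hermitian_normalmx.
Qed.

Lemma hermitian_spectral_real j : spectral_diag A 0 j \is Num.real.
Proof. by have /mxOverP := hermitian_spectral_diag_real hermA; apply. Qed.

Lemma eigenvalues_hermitian :
  perm_eq (eigenvalues A) [seq spectral_diag A 0 j | j <- enum 'I_n].
Proof.
rewrite {1}hermitian_spectralE.
exact/eigenvalues_unitary_diag/spectral_unitarymx.
Qed.

Lemma eigenvalues_hermitianN :
  perm_eq (eigenvalues (- A)) [seq - spectral_diag A 0 j | j <- enum 'I_n].
Proof.
have -> : - A =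
    (spectralmx A)^t* *m diag_mx (- spectral_diag A) *m spectralmx A.
  by rewrite {1}hermitian_spectralE raddfN mulmxN mulNmx.
apply: perm_trans (eigenvalues_unitary_diag _ (spectral_unitarymx A)) _.
by rewrite (eq_map (g := fun j => - spectral_diag A 0 j)) // => j; rewrite mxE.
Qed.

Lemma eig_nneg_hermitian :
  eig_nneg A = #|[set j | 0 <= spectral_diag A 0 j]|.
Proof.
rewrite /eig_nneg; move/permP: eigenvalues_hermitian => ->.
by rewrite count_map count_enum_card.
Qed.

Lemma eig_nnegN : eig_nneg (- A) = count (fun z => z <= 0) (eigenvalues A).
Proof.
rewrite /eig_nneg; move/permP: eigenvalues_hermitianN => ->.
move/permP: eigenvalues_hermitian => ->; rewrite !count_map.
by apply: eq_count => j /=; rewrite oppr_ge0.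
Qed.

Lemma eig_nneg_skew : A^T = - A -> (n <= (eig_nneg A).*2)%N.
Proof.
move=> skewA.
have eig_nneg_tr : eig_nneg (- A) = eig_nneg A.
  rewrite -skewA /eig_nneg.
  by move/permP: (perm_eigenvalues (char_poly_trmx A)) => ->.
have size_eig : size (eigenvalues A) = n.
  by rewrite (perm_size eigenvalues_hermitian) size_map size_enum_ord.
have all_real : count [predU (fun z : algC => 0 <= z) & fun z => z <= 0]
    (eigenvalues A) = size (eigenvalues A).
  apply/eqP; rewrite -all_count.
  rewrite (perm_all _ eigenvalues_hermitian) all_map.
  by apply/allP => j _ /=; rewrite -realE hermitian_spectral_real.
rewrite -addnn -{2}eig_nneg_tr eig_nnegN /eig_nneg -count_predUI.
by rewrite all_real size_eig leq_addr.
Qed.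

Lemma rank_le_eig_nneg k (W : 'M_(k, n)) :
  (forall x : 'rV_k, 0 <= qform A (x *m W)) -> (\rank W <= eig_nneg A)%N.
Proof.
move=> W_nneg; set P := spectralmx A; set d := spectral_diag A.
pose Neg := [set j | d 0 j < 0].
pose f : 'I_#|Neg| -> 'I_n := enum_val.
have f_neg i : d 0 (f i) < 0 by have := enum_valP i; rewrite inE.
pose N := rowsub f P.
have rankN : \rank N = #|Neg|.
  rewrite mxrank_unitary // rowsub_unitarymx ?spectral_unitarymx //.
  exact: enum_val_inj.
have WN0 : (W :&: N)%MS = 0.
  apply/eqP/rowV0P => z; rewrite sub_capmx.
  move=> /andP[/submxP[x ->] /submxP[y zE]].
  have := W_nneg x; rewrite zE {1}hermitian_spectralE.
  rewrite qform_unitary_diag ?spectral_unitarymx //; last exact: enum_val_inj.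
  by move/(sum_neg_weights_ge0 f_neg) ->; rewrite mul0mx.
have -> : eig_nneg A = #|~: Neg|.
  rewrite eig_nneg_hermitian; apply: eq_card => j.
  by rewrite !inE -real_leNgt ?hermitian_spectral_real.
rewrite -(leq_add2l #|Neg|) cardsC card_ord -rankN addnC.
by rewrite -mxrank_disjoint_sum // rank_leq_col.
Qed.

Lemma hermitianN : - A \is hermsymmx.
Proof.
have := is_hermitianmxP _ _ _ hermA; rewrite expr0 scale1r => AE.
apply/is_hermitianmxP; rewrite expr0 scale1r; apply/matrixP => i j.
by rewrite !mxE {1}AE !mxE rmorphN.
Qed.

Lemma hermitian_compress k (E : 'M_(k, n)) : E *m A *m E^t* \is hermsymmx.
Proof.
apply/is_hermitianmxP; rewrite expr0 scale1r !trmx_mul !map_mxM trmxCK mulmxA.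
by have := is_hermitianmxP _ _ _ hermA; rewrite expr0 scale1r => <-.
Qed.

End Hermitian.

Lemma eig_nneg_compress n k (A : 'M[algC]_n) (E : 'M_(k, n)) :
  A \is hermsymmx -> E \is unitarymx ->
  (eig_nneg (E *m A *m E^t*) <= eig_nneg A)%N.
Proof.
move=> hermA Eu; set B := E *m A *m E^t*.
have hermB : B \is hermsymmx := hermitian_compress hermA E.
pose G := [set j | 0 <= spectral_diag B 0 j].
pose g : 'I_#|G| -> 'I_k := enum_val.
have g_inj : injective g := enum_val_inj.
pose W := rowsub g (spectralmx B) *m E.
have Wu : W \is unitarymx.
  by rewrite mul_unitarymx // rowsub_unitarymx ?spectral_unitarymx.
rewrite (eig_nneg_hermitian hermB) -(mxrank_unitary Wu).
apply: rank_le_eig_nneg => // x; rewrite mulmxA qform_mul -/B.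
rewrite {1}(hermitian_spectralE hermB) qform_unitary_diag ?spectral_unitarymx //.
apply: sumr_ge0 => i _; apply: mulr_ge0; last exact: mul_conjC_ge0.
by have := enum_valP i; rewrite inE.
Qed.

Lemma mxsub_compress n k (f : 'I_k -> 'I_n) (A : 'M[algC]_n) :
  mxsub f f A = rowsub f 1%:M *m A *m (rowsub f 1%:M)^t*.
Proof. by rewrite mul_rowsub_mx mul1mx rowsub_mul_trC trmx1 map_mx1 mulmx1. Qed.

Lemma eig_nneg_mxsub n k (f : 'I_k -> 'I_n) (A : 'M[algC]_n) :
  injective f -> A \is hermsymmx -> (eig_nneg (mxsub f f A) <= eig_nneg A)%N.
Proof.
move=> f_inj hermA.
rewrite mxsub_compress eig_nneg_compress // rowsub_unitarymx //.
by apply/unitarymxP; rewrite trmx1 map_mx1 mulmx1.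
Qed.

Lemma hermitian_mxsub n k (f : 'I_k -> 'I_n) (A : 'M[algC]_n) :
  A \is hermsymmx -> mxsub f f A \is hermsymmx.
Proof. by move=> hermA; rewrite mxsub_compress hermitian_compress. Qed.

Section HermitianAdjacency.
Variables (n : nat) (arc : rel 'I_n).

Lemma herm_adj_conj u v : herm_adj arc v u = (herm_adj arc u v)^*.
Proof.
rewrite !mxE; case: (arc u v); case: (arc v u) => /=.
- by rewrite rmorph1.
- exact/esym/conjCi.
- by rewrite -[LHS]conjCK conjCi.
- by rewrite rmorph0.
Qed.

Lemma herm_adj_hermitian : herm_adj arc \is hermsymmx.
Proof.
apply/is_hermitianmxP; rewrite expr0 scale1r; apply/matrixP => u v.
by rewrite [RHS]mxE [X in X^*]mxE -herm_adj_conj.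
Qed.

Lemma herm_adj_skew u v :
  ~~ digon arc u v -> herm_adj arc v u = - herm_adj arc u v.
Proof.
rewrite /digon !mxE.
by case: (arc u v); case: (arc v u); rewrite /= ?oppr0 ?opprK.
Qed.

End HermitianAdjacency.

Theorem theorem4p3 (n : nat) (arc : rel 'I_n) (S : {set 'I_n}) :
  digraph_ok arc ->
  (forall u v, u \in S -> v \in S -> ~~ digon arc u v) ->
  (uphalf #|S| <= eta_plus arc)%N /\ (uphalf #|S| <= eta_minus arc)%N.
Proof.
move=> _ no_digon; set H := herm_adj arc.
pose v : 'I_#|S| -> 'I_n := enum_val.
have v_inj : injective v := enum_val_inj.
have hermH : H \is hermsymmx := herm_adj_hermitian arc.
have hermNH : - H \is hermsymmx := hermitianN hermH.
have skew_HS : (mxsub v v H)^T = - mxsub v v H.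
  apply/matrixP => i j; move: (no_digon _ _ (enum_valP i) (enum_valP j)).
  by move/herm_adj_skew; rewrite !mxE.
have half_le (B : 'M_#|S|) : B \is hermsymmx -> B^T = - B ->
    (uphalf #|S| <= eig_nneg B)%N.
  by move=> hermB skewB; rewrite leq_uphalf_double eig_nneg_skew.
split.
  exact: leq_trans (half_le _ (hermitian_mxsub v hermH) skew_HS)
                   (eig_nneg_mxsub v_inj hermH).
rewrite /eta_minus -eig_nnegN //.
apply: leq_trans (eig_nneg_mxsub v_inj hermNH).
apply: half_le; first exact: hermitian_mxsub.
by rewrite raddfN /= (raddfN (@trmx _ _ _)) /= skew_HS.
Qed.
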